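(* For every integer $\chi\geq 6$ and every positive integer $N$, there exists a family $\mathcal{F}$ of at least $N$ pairwise non-isomorphic finite graphs such that every $G\in\mathcal{F}$ has chromatic number $\chi$ and no frozen vertices, and $\mathcal{C}_\chi(G)\cong\mathcal{C}_\chi(G')$ for all $G,G'\in\mathcal{F}$.
   Context: All graphs are finite and simple. For a positive integer $k$, a (proper) $k$-colouring of $G$ is a map $c:V(G)\to\{1,\dots,k\}$ with $c(u)\neq c(v)$ for every edge $uv$; $\chi(G)$ is the chromatic number. The $k$-recolouring graph $\mathcal{C}_k(G)$ is the graph whose vertices are all $k$-colourings of $G$, two colourings being adjacent if and only if they differ at exactly one vertex. A vertex $v$ of $G$ is frozen if for every $\chi(G)$-colouring $c$ of $G$, every colour in $\{1,\dots,\chi(G)\}$ appears on the closed neighbourhood of $v$ (so $v$ can never be recoloured); otherwise $v$ is recolourable. *)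

From mathcomp Require Import all_boot.
Set Implicit Arguments. Unset Strict Implicit. Unset Printing Implicit Defensive.

Record sgraph := SGraph {
  vert : finType;
  adj : rel vert;
  adj_sym : symmetric adj;
  adj_irr : irreflexive adj }.

Definition graph_iso (A B : Type) (ea : A -> A -> Prop) (eb : B -> B -> Prop) :=
  exists f : A -> B, bijective f /\ forall x y, ea x y <-> eb (f x) (f y).

Definition sgraph_iso (G H : sgraph) :=
  graph_iso (fun x y : vert G => adj x y) (fun x y : vert H => adj x y).

(* Proper k-colourings, colours are 'I_k (i.e. {0,...,k-1} ~ {1,...,k}). *)
Definition proper (G : sgraph) (k : nat) (c : {ffun vert G -> 'I_k}) : bool :=
  [forall x, forall y, adj x y ==> (c x != c y)].

Definition colorable (G : sgraph) (k : nat) : Prop :=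
  exists c : {ffun vert G -> 'I_k}, proper c.

Definition chromatic_number (G : sgraph) (k : nat) : Prop :=
  colorable G k /\ forall j, colorable G j -> k <= j.

(* The vertex set of the k-recolouring graph C_k(G). *)
Definition colouring (G : sgraph) (k : nat) :=
  {c : {ffun vert G -> 'I_k} | proper c}.

Definition recol_adj (G : sgraph) (k : nat) (a b : colouring G k) : Prop :=
  #|[set x | val a x != val b x]| = 1.

Definition recol_iso (G H : sgraph) (k : nat) :=
  graph_iso (@recol_adj G k) (@recol_adj H k).

(* v is frozen w.r.t. k-colourings (used with k = chi(G)): every proper
   k-colouring uses every colour on the closed neighbourhood of v. *)
Definition frozen (G : sgraph) (k : nat) (v : vert G) : Prop :=
  forall c : {ffun vert G -> 'I_k}, proper c ->
    forall a : 'I_k, exists u, ((u == v) || adj v u) && (c u == a).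

From Pilot Require Import Defs.
From mathcomp Require Import all_boot zify.
Set Implicit Arguments. Unset Strict Implicit. Unset Printing Implicit Defensive.

(* The graphs are built on the complement of the odd cycle C_(2c+1), whose
   chromatic number is c+1: a colour class consists of pairwise consecutive
   cycle vertices, so it has at most two elements, and a (c+1)-colouring uses
   every colour on the cycle.  Add N pendants y_k, adjacent to the cycle
   vertices >= 4, and a hub z, adjacent to the cycle vertices outside [5, 8].
   In a (c+1)-colouring the colour of y_k occurs on a cycle vertex below 4,
   which is adjacent to z, so y_k and z always get different colours.  Hence
   adding the edges y_k z for k < t changes neither the (c+1)-colourings nor
   C_(c+1), while the number of edges tells the graphs apart.  Rotations of the
   colouring with classes {0}, {1, 2}, {3, 4}, ... show that no vertex is
   frozen. *)

Lemma proper_colouringP (G : sgraph) k (f : {ffun vert G -> 'I_k}) :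
  reflect (forall u v, adj u v -> f u != f v) (Defs.proper f).
Proof.
apply: (iffP forallP) => [hf u v|hf u]; first exact/implyP/(forallP (hf u)).
by apply/forallP => v; apply/implyP/hf.
Qed.

Lemma not_frozen_of_missing_colour (G : sgraph) k (v : vert G)
    (f : {ffun vert G -> 'I_k}) (x : 'I_k) :
  Defs.proper f -> (forall u, (u == v) || adj v u -> f u != x) -> ~ frozen k v.
Proof.
move=> f_proper missing /(_ f f_proper x) [u /andP[uNv /eqP fu]].
by have := missing u uNv; rewrite fu eqxx.
Qed.

Definition edge_set (G : sgraph) := [set p : vert G * vert G | adj p.1 p.2].

Lemma sgraph_iso_card_edge_set (G H : sgraph) :
  sgraph_iso G H -> #|edge_set G| = #|edge_set H|.
Proof.
case=> f [[g fK gK] adjE].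
have f2_inj : injective (fun p : vert G * vert G => (f p.1, f p.2)).
  by move=> [a b] [a' b'] /= [/(can_inj fK) -> /(can_inj fK) ->].
rewrite -(card_imset _ f2_inj); congr #|pred_of_set _|.
apply/setP => -[x y]; rewrite inE /=; apply/imsetP/idP => [[[a b]]|xy].
  by rewrite inE /= => ab [-> ->]; apply/adjE.
by exists (g x, g y); rewrite ?inE /= ?gK //; apply/adjE; rewrite !gK.
Qed.

Lemma recol_iso_of_same_colourings (T : finType) (e e' : rel T)
    (e_sym : symmetric e) (e_irr : irreflexive e)
    (e'_sym : symmetric e') (e'_irr : irreflexive e') k :
  (forall f : {ffun T -> 'I_k},
     Defs.proper (G := SGraph e_sym e_irr) f =
     Defs.proper (G := SGraph e'_sym e'_irr) f) ->
  recol_iso (SGraph e_sym e_irr) (SGraph e'_sym e'_irr) k.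
Proof.
move=> properE.
pose to (a : colouring (SGraph e_sym e_irr) k) : colouring (SGraph e'_sym e'_irr) k :=
  exist _ (val a) (etrans (esym (properE _)) (valP a)).
pose from (b : colouring (SGraph e'_sym e'_irr) k) : colouring (SGraph e_sym e_irr) k :=
  exist _ (val b) (etrans (properE _) (valP b)).
exists to; split; last by [].
by exists from => ?; apply: val_inj.
Qed.

Definition cycle_edge (n a b : nat) : bool :=
  [|| a.+1 == b, b.+1 == a, (a == 0) && (b == n.-1) | (b == 0) && (a == n.-1)].

Section CycleComplementColourings.

Variables (n j : nat) (f : 'I_n -> 'I_j).
Hypothesis f_proper :
  forall a b : 'I_n, a != b -> ~~ cycle_edge n a b -> f a != f b.

Lemma card_colour_class_le2 x : 4 <= n -> #|[set a | f a == x]| <= 2.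
Proof.
move=> n_ge4; rewrite leqNgt; apply/card_gt2P => -[a [b [d [[ha hb hd] [nab nbd nda]]]]].
rewrite !inE in ha hb hd.
have class_edge u v : f u == x -> f v == x -> u != v -> cycle_edge n u v.
  move=> /eqP fu /eqP fv uNv; apply/negPn/negP => /(f_proper uNv).
  by rewrite fu fv eqxx.
move: (class_edge a b ha hb nab) (class_edge b d hb hd nbd) (class_edge d a hd ha nda).
move: nab nbd nda; rewrite /cycle_edge -!val_eqE /=.
by case: a b d {ha hb hd} => [a ?] [b ?] [d ?] /=; lia.
Qed.

Lemma sum_card_colour_classes : \sum_(x < j) #|[set a | f a == x]| = n.
Proof.
rewrite -[RHS]card_ord -sum1_card (partition_big f predT) //=.
by apply: eq_bigr => x _; rewrite -sum1_card; apply: eq_bigl => a; rewrite inE.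
Qed.

Lemma cycle_complement_colours_lb : 4 <= n -> n <= 2 * j.
Proof.
move=> n_ge4; rewrite -sum_card_colour_classes.
apply: leq_trans (_ : \sum_(x < j) 2 <= _); last by rewrite sum_nat_const card_ord mulnC.
by apply: leq_sum => x _; apply: card_colour_class_le2.
Qed.

Lemma cycle_complement_colouring_surj x : 4 <= n -> 2 * j.-1 < n -> exists a, f a = x.
Proof.
move=> n_ge4 n_gt; case: (pickP (fun a => f a == x)) => [a /eqP|no_x]; first by exists a.
have class_x0 : #|[set a | f a == x]| = 0.
  by apply/eqP; rewrite cards_eq0; apply/eqP/setP => a; rewrite !inE no_x.
exfalso; move: n_gt; apply/negP.
rewrite -leqNgt -sum_card_colour_classes (bigD1 x) //= class_x0 add0n.
apply: leq_trans (_ : \sum_(y < j | y != x) 2 <= _).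
  by apply: leq_sum => y _; apply: card_colour_class_le2.
by rewrite (sum_nat_const (predC1 x)) cardC1 card_ord mulnC.
Qed.

End CycleComplementColourings.

Section HubGraph.

Variables (c N : nat).
Local Notation n := (2 * c).+1.

(* [inl a] is the cycle vertex a, [inr (Some k)] the pendant y_k and
   [inr None] the hub z. *)
Definition hub_vert : finType := ('I_n + option 'I_N)%type.

Definition hub_adj (t : nat) (u v : hub_vert) : bool :=
  match u, v with
  | inl a, inl b => (nat_of_ord a != b) && ~~ cycle_edge n a b
  | inl a, inr (Some _) | inr (Some _), inl a => 4 <= a
  | inl a, inr None | inr None, inl a => ~~ (5 <= a <= 8)
  | inr (Some k), inr None | inr None, inr (Some k) => k < t
  | _, _ => false
  end.

Lemma hub_adj_sym t : symmetric (hub_adj t).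
Proof. by move=> [a|[k|]] [b|[l|]] //=; rewrite /cycle_edge; lia. Qed.

Lemma hub_adj_irr t : irreflexive (hub_adj t).
Proof. by move=> [a|[k|]] //=; rewrite eqxx. Qed.

Definition hub_graph t := SGraph (hub_adj_sym t) (hub_adj_irr t).

Lemma card_edge_set_hub_graph_lt (t t' : 'I_N) :
  t < t' -> #|edge_set (hub_graph t)| < #|edge_set (hub_graph t')|.
Proof.
move=> tt'; apply: proper_card; apply/properP; split.
  by apply/subsetP => -[[a|[k|]] [b|[l|]]]; rewrite !inE //=; lia.
by exists (inr (Some t), inr None); rewrite !inE /=; lia.
Qed.

Lemma card_edge_set_hub_graph_inj (t t' : 'I_N) :
  #|edge_set (hub_graph t)| = #|edge_set (hub_graph t')| -> t = t'.
Proof.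
move=> edgesE; case: (ltngtP t t') => [lt_tt'|lt_t't|/val_inj//].
- by have := card_edge_set_hub_graph_lt lt_tt'; rewrite edgesE ltnn.
- by have := card_edge_set_hub_graph_lt lt_t't; rewrite edgesE ltnn.
Qed.

Hypothesis c_ge4 : 4 <= c.

(* On the cycle, colour 0 of [shift_colouring s] is used on s alone and colour
   x > 0 on s + 2x - 1 and s + 2x (mod n); every other vertex copies the colour
   of its [anchor], a cycle vertex it is not adjacent to. *)
Definition pair_colour (s i : nat) : nat :=
  (if s <= i then i - s else i + n - s).+1 %/ 2.

Definition anchor (u : hub_vert) : nat :=
  match u with inl i => i | inr (Some _) => 2 | inr None => 7 end.

Definition shift_colouring (s : nat) : {ffun hub_vert -> 'I_c.+1} :=
  [ffun u => inord (pair_colour s (anchor u))].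

Lemma shift_colouringE s u :
  s < n -> val (shift_colouring s u) = pair_colour s (anchor u).
Proof.
move=> s_lt; rewrite ffunE /= inordK //.
by case: u => [[i i_lt]|[k|]]; rewrite /= /pair_colour; case: ifP; lia.
Qed.

Lemma pair_colour_eq_cycle_edge s a b : s < n -> a < n -> b < n ->
  pair_colour s a = pair_colour s b -> (a == b) || cycle_edge n a b.
Proof.
by move=> s_lt a_lt b_lt; rewrite /pair_colour /cycle_edge; do ! case: ifP; lia.
Qed.

Lemma shift_colouring_proper t s :
  s < n -> Defs.proper (G := hub_graph t) (shift_colouring s).
Proof.
move=> s_lt; apply/proper_colouringP => u v uv; rewrite -val_eqE !shift_colouringE //.
apply/eqP => /pair_colour_eq_cycle_edge; move: uv.
by case: u => [[a ?]|[k|]]; case: v => [[b ?]|[l|]] //=; rewrite /cycle_edge; lia.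
Qed.

Lemma hub_graph_proper_cycle t j (f : {ffun hub_vert -> 'I_j}) :
  Defs.proper (G := hub_graph t) f ->
  forall a b : 'I_n, a != b -> ~~ cycle_edge n a b -> f (inl a) != f (inl b).
Proof.
move=> /proper_colouringP f_proper a b ab ab_far.
by apply: (f_proper (inl a) (inl b)); rewrite /= ab_far andbT val_eqE.
Qed.

Lemma hub_graph_chromatic t : chromatic_number (hub_graph t) c.+1.
Proof.
split; first by exists (shift_colouring 0); apply: shift_colouring_proper.
move=> j [f /hub_graph_proper_cycle f_proper].
suff : n <= 2 * j by lia.
by apply: (cycle_complement_colours_lb f_proper); lia.
Qed.

Lemma hub_graph_pendant_hub_neq t (f : {ffun hub_vert -> 'I_c.+1}) :
  Defs.proper (G := hub_graph t) f -> forall k, f (inr (Some k)) != f (inr None).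
Proof.
move=> f_proper k; have /proper_colouringP f_adj := f_proper.
have [a fa] : exists a, f (inl a) = f (inr (Some k)).
  by apply: (cycle_complement_colouring_surj (hub_graph_proper_cycle f_proper)); lia.
have a_lt4 : a < 4.
  rewrite ltnNge; apply/negP => a_ge4.
  by have := f_adj (inl a) (inr (Some k)) a_ge4; rewrite fa eqxx.
by rewrite -fa; apply: (f_adj (inl a) (inr None)) => /=; lia.
Qed.

Lemma hub_graph_proper_indep t t' (f : {ffun hub_vert -> 'I_c.+1}) :
  Defs.proper (G := hub_graph t) f = Defs.proper (G := hub_graph t') f.
Proof.
wlog suff imp : t t' /
    Defs.proper (G := hub_graph t) f -> Defs.proper (G := hub_graph t') f.
  by apply/idP/idP; apply: imp.
move=> f_proper; have hub := hub_graph_pendant_hub_neq f_proper.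
have /proper_colouringP f_proper' := f_proper.
apply/proper_colouringP => -[a|[k|]] [b|[l|]] uv //=;
  by [apply: f_proper' | rewrite hub | rewrite eq_sym hub].
Qed.

Lemma shift_colouring_missing_not_frozen t (v : vert (hub_graph t)) s x :
  s < n -> x <= c ->
  (forall u, (u == v) || hub_adj t v u -> pair_colour s (anchor u) != x) ->
  ~ frozen c.+1 v.
Proof.
move=> s_lt x_le missing.
apply: (not_frozen_of_missing_colour (shift_colouring_proper t s_lt) (x := inord x)).
by move=> u /missing; rewrite -val_eqE shift_colouringE //= inordK.
Qed.

Lemma hub_graph_not_frozen t (v : vert (hub_graph t)) : ~ frozen c.+1 v.
Proof.
case: v => [[a a_lt]|[k|]].
- have [s s_lt a_s] : exists2 s, s < n & cycle_edge n a s.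
    by exists (if a == 2 * c then 0 else a.+1); rewrite /cycle_edge; case: ifP; lia.
  apply: (@shift_colouring_missing_not_frozen _ _ s 0) => //.
  move: a_s; rewrite /cycle_edge /pair_colour => a_s [[b ?]|[l|]] /=.
  + rewrite -sum_eqE /= -val_eqE /= /cycle_edge; case: (leqP s b); lia.
  + case: (leqP s 2); lia.
  + case: (leqP s 7); lia.
- apply: (@shift_colouring_missing_not_frozen _ _ (2 * c) 1); try lia.
  by move=> [[b ?]|[l|]]; rewrite /= /pair_colour; do ! case: ifP; lia.
- apply: (@shift_colouring_missing_not_frozen _ _ 4 1); try lia.
  by move=> [[b ?]|[l|]]; rewrite /= /pair_colour /=; try case: (leqP 4 b); lia.
Qed.

End HubGraph.

Theorem theorem1p4 (chi N : nat) : 6 <= chi -> 0 < N ->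
  exists (M : nat) (F : 'I_M -> sgraph),
    N <= M /\
    (forall i j : 'I_M, i != j -> ~ sgraph_iso (F i) (F j)) /\
    (forall i : 'I_M, chromatic_number (F i) chi /\
                      forall v : vert (F i), ~ frozen chi v) /\
    (forall i j : 'I_M, recol_iso (F i) (F j) chi).
Proof.
case: chi => [//|c] chi_ge6 _; have c_ge4 : 4 <= c by lia.
exists N, (fun i : 'I_N => hub_graph c N i); split=> //; split.
  move=> i j ij /sgraph_iso_card_edge_set /card_edge_set_hub_graph_inj eq_ij.
  by rewrite eq_ij eqxx in ij.
split=> [i|i j].
  by split; [exact: hub_graph_chromatic | exact: hub_graph_not_frozen].
by apply: recol_iso_of_same_colourings => f; apply: hub_graph_proper_indep.
Qed.
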